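(* For every $\lambda\in\Lambda$, every nonzero subcomodule of $\nabla_I(\lambda)$ contains the element $\delta^{x_1}d^{y_1}\cdots\delta^{x_n}d^{y_n}$ (the highest weight vector of $\nabla_I(\lambda)$).
   Context: $k$ algebraically closed. $\mathcal{O}_{nc}(\mathrm{GL}_2)$ is the Hopf algebra generated by $a,b,c,d,\delta,\delta^{-1}$ with relations $ac=ca$, $bd=db$, $ad-cb=\delta=da-bc$, $\delta\delta^{-1}=1=\delta^{-1}\delta$, $a\delta^{-1}d-b\delta^{-1}c=1=d\delta^{-1}a-c\delta^{-1}b$, $b\delta^{-1}a=a\delta^{-1}b$, $c\delta^{-1}d=d\delta^{-1}c$, with $\Delta(a)=a\otimes a+b\otimes c$, $\Delta(b)=a\otimes b+b\otimes d$, $\Delta(c)=c\otimes a+d\otimes c$, $\Delta(d)=c\otimes b+d\otimes d$, $\Delta(\delta^{\pm1})=\delta^{\pm1}\otimes\delta^{\pm1}$. $\Lambda$: monoid generated by $d,\delta,\delta^{-1}$ with $\delta\delta^{-1}=\delta^{-1}\delta=1$, elements in reduced form $\lambda=\delta^{x_1}d^{y_1}\cdots\delta^{x_n}d^{y_n}$. $\nabla_I(\lambda)$: the span in $\mathcal{O}_{nc}(\mathrm{GL}_2)$ of $\delta^{x_1}b^{y_1'}d^{y_1''}\cdots\delta^{x_n}b^{y_n'}d^{y_n''}$ with $y_i'+y_i''=y_i$, a subcomodule of the regular left comodule $(\mathcal{O}_{nc}(\mathrm{GL}_2),\Delta)$. *)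

(* Concrete presentation of O_nc(GL_2) by generators and
   relations: elements of the free algebra k<a,b,c,d,del,deli> are formal
   finite linear combinations of words; O_nc(GL_2) is its quotient by the
   two-sided ideal generated by the defining relations; O ⊗ O is the quotient
   of (free ⊗ free) by I⊗F + F⊗I. *)
From HB Require Import structures.
From mathcomp Require Import all_boot all_order all_algebra.
Set Implicit Arguments. Unset Strict Implicit. Unset Printing Implicit Defensive.
Import GRing.Theory.
Local Open Scope ring_scope.

Section Onc.
Variable k : closedFieldType.

Definition gen := 'I_6.
Definition ga : gen := @Ordinal 6 0 isT.
Definition gb : gen := @Ordinal 6 1 isT.
Definition gc : gen := @Ordinal 6 2 isT.
Definition gd : gen := @Ordinal 6 3 isT.
Definition gdel : gen := @Ordinal 6 4 isT.
Definition gdeli : gen := @Ordinal 6 5 isT.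

Definition word := seq gen.

Definition fpoly := seq (k * word).
Definition coef (p : fpoly) (w : word) : k := \sum_(x <- p | x.2 == w) x.1.
Definition fscale (c : k) (p : fpoly) : fpoly := [seq (c * x.1, x.2) | x <- p].
Definition fsub (p q : fpoly) : fpoly := p ++ fscale (-1) q.
Definition fmul (p q : fpoly) : fpoly :=
  [seq (x.1 * y.1, x.2 ++ y.2) | x <- p, y <- q].
Definition fw (w : word) : fpoly := [:: (1, w)].
Definition fone : fpoly := fw [::].

Definition rels : seq fpoly :=
  [:: fsub (fw [:: ga; gc]) (fw [:: gc; ga]);
      fsub (fw [:: gb; gd]) (fw [:: gd; gb]);
      fsub (fsub (fw [:: ga; gd]) (fw [:: gc; gb])) (fw [:: gdel]);
      fsub (fsub (fw [:: gd; ga]) (fw [:: gb; gc])) (fw [:: gdel]);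
      fsub (fw [:: gdel; gdeli]) fone;
      fsub (fw [:: gdeli; gdel]) fone;
      fsub (fsub (fw [:: ga; gdeli; gd]) (fw [:: gb; gdeli; gc])) fone;
      fsub (fsub (fw [:: gd; gdeli; ga]) (fw [:: gc; gdeli; gb])) fone;
      fsub (fw [:: gb; gdeli; ga]) (fw [:: ga; gdeli; gb]);
      fsub (fw [:: gc; gdeli; gd]) (fw [:: gd; gdeli; gc])].

Inductive inI : fpoly -> Prop :=
| I_gen r u v : r \in rels -> inI (fmul u (fmul r v))
| I_add p q : inI p -> inI q -> inI (p ++ q)
| I_ext p q : (forall w, coef p w = coef q w) -> inI p -> inI q.

Definition eqO (p q : fpoly) : Prop := inI (fsub p q).

Definition fpoly2 := seq (k * (word * word)).
Definition coef2 (P : fpoly2) (w : word * word) : k :=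
  \sum_(x <- P | x.2 == w) x.1.
Definition fscale2 (c : k) (P : fpoly2) : fpoly2 := [seq (c * x.1, x.2) | x <- P].
Definition fsub2 (P Q : fpoly2) : fpoly2 := P ++ fscale2 (-1) Q.
Definition fmul2 (P Q : fpoly2) : fpoly2 :=
  [seq (x.1 * y.1, (x.2.1 ++ y.2.1, x.2.2 ++ y.2.2)) | x <- P, y <- Q].
Definition tens (p q : fpoly) : fpoly2 :=
  [seq (x.1 * y.1, (x.2, y.2)) | x <- p, y <- q].

(* the subspace I ⊗ F + F ⊗ I, kernel of F⊗F -> O ⊗ O *)
Inductive inJ : fpoly2 -> Prop :=
| J_l p q : inI p -> inJ (tens p q)
| J_r p q : inI q -> inJ (tens p q)
| J_add P Q : inJ P -> inJ Q -> inJ (P ++ Q)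
| J_ext P Q : (forall w, coef2 P w = coef2 Q w) -> inJ P -> inJ Q.

Definition t1 (u v : word) : fpoly2 := [:: (1, (u, v))].
Definition deltaGen (g : gen) : fpoly2 :=
  if g == ga then t1 [:: ga] [:: ga] ++ t1 [:: gb] [:: gc]
  else if g == gb then t1 [:: ga] [:: gb] ++ t1 [:: gb] [:: gd]
  else if g == gc then t1 [:: gc] [:: ga] ++ t1 [:: gd] [:: gc]
  else if g == gd then t1 [:: gc] [:: gb] ++ t1 [:: gd] [:: gd]
  else if g == gdel then t1 [:: gdel] [:: gdel]
  else t1 [:: gdeli] [:: gdeli].
Definition deltaWord (w : word) : fpoly2 :=
  foldr (fun g acc => fmul2 (deltaGen g) acc) (t1 [::] [::]) w.
Definition Delta (p : fpoly) : fpoly2 :=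
  flatten [seq fscale2 x.1 (deltaWord x.2) | x <- p].

(* V is a k-subspace of O_nc(GL_2) (a predicate on representatives,
   invariant under equality in O) *)
Definition subspaceO (V : fpoly -> Prop) : Prop :=
  [/\ forall p q, eqO p q -> V p -> V q,
      V [::],
      forall p q, V p -> V q -> V (p ++ q) &
      forall c p, V p -> V (fscale c p)].

(* V is a subcomodule of the regular left comodule (O, Delta):
   Delta(V) ⊆ O ⊗ V *)
Definition subcomodule (V : fpoly -> Prop) : Prop :=
  subspaceO V /\
  forall p, V p -> exists (l : seq (fpoly * fpoly)),
      (forall x, x \in l -> V x.2) /\
      inJ (fsub2 (Delta p) (flatten [seq tens x.1 x.2 | x <- l])).

(* Λ: an element in reduced form δ^{x1} d^{y1} ... δ^{xn} d^{yn}, encoded by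
   the sequence [:: (x1,y1); ...; (xn,yn)], n >= 1, x_i ≠ 0 for i >= 2,
   y_i ≠ 0 for i <= n-1. *)
Definition reducedLam (s : seq (int * nat)) : Prop :=
  (0 < size s)%N /\
  forall i, (i < size s)%N ->
    ((0 < i)%N -> (nth (0%:Z, 0%N) s i).1 != 0) /\
    ((i < (size s).-1)%N -> (nth (0%:Z, 0%N) s i).2 != 0%N).

Definition delw (x : int) : word :=
  match x with Posz m => nseq m gdel | Negz m => nseq m.+1 gdeli end.

(* the word δ^{x1} b^{y1'} d^{y1''} ... δ^{xn} b^{yn'} d^{yn''} *)
Definition nablaWord (s : seq (int * nat)) (ys' : seq nat) : word :=
  flatten [seq delw (nth (0%:Z, 0%N) s i).1
               ++ nseq (nth 0%N ys' i) gb
               ++ nseq ((nth (0%:Z, 0%N) s i).2 - nth 0%N ys' i) gd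
          | i <- iota 0 (size s)].

Definition inW (s : seq (int * nat)) (w : word) : Prop :=
  exists ys' : seq nat, size ys' = size s /\
    (forall i, (i < size s)%N -> (nth 0%N ys' i <= (nth (0%:Z, 0%N) s i).2)%N) /\
    w = nablaWord s ys'.

(* ∇_I(λ): the span of these words in O_nc(GL_2) *)
Definition inNabla (s : seq (int * nat)) (p : fpoly) : Prop :=
  exists q : fpoly, (forall x, x \in q -> inW s x.2) /\ eqO p q.

Definition hwWord (s : seq (int * nat)) : word :=
  flatten [seq delw x.1 ++ nseq x.2 gd | x <- s].

End Onc.

(* Grade the free algebra by [a, c, δ ↦ 1], [δ^{-1} ↦ -1], [b, d ↦ 0].  The
   relations are homogeneous, so [I] is graded, and [∇_I(λ)] lies in the degree
   [D] of its highest weight vector [h].  For a word [w] of [∇_I(λ)],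
   [Δ(w) = Σ w' ⊗ w''] where [w''] turns some [d]s of [w] into [b]s and then
   [deg w' = D + #b(w'')], so [w ⊗ h] is the only summand with [deg w' = D].
   Given a nonzero [v ∈ V], pick a functional [f] supported in degree [D] with
   [f(v) = 1] that kills the finitely many elements of [I] witnessing
   [Δ(v) ∈ O ⊗ V]; then [(f ⊗ id) Δ(v) = h] lies in [V]. *)

From HB Require Import structures.
From mathcomp Require Import all_boot all_order all_algebra zify.
From Stdlib Require Import Classical_Prop.
Set Implicit Arguments. Unset Strict Implicit. Unset Printing Implicit Defensive.
Import GRing.Theory.
Local Open Scope ring_scope.

Section Onc.
Variable k : closedFieldType.
Implicit Types (p q : fpoly k) (w u : word) (f : word -> k) (P Q : fpoly2 k).

Lemma coef_cat p q w : coef (p ++ q) w = coef p w + coef q w.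
Proof. by rewrite /coef big_cat. Qed.

Lemma coef_scale c p w : coef (fscale c p) w = c * coef p w.
Proof. by rewrite /coef big_map mulr_sumr. Qed.

Lemma coef_fsub p q w : coef (fsub p q) w = coef p w - coef q w.
Proof. by rewrite /fsub coef_cat coef_scale mulN1r. Qed.

Lemma coef_nil w : coef ([::] : fpoly k) w = 0.
Proof. by rewrite /coef big_nil. Qed.

Lemma coef_fw u w : coef (fw k u) w = (u == w)%:R.
Proof. by rewrite /coef big_cons big_nil /=; case: (u == w); rewrite ?addr0. Qed.

Lemma coef_flatten (L : seq (fpoly k)) w : coef (flatten L) w = \sum_(X <- L) coef X w.
Proof. by rewrite /coef big_flatten. Qed.

Lemma coef_notin q w : w \notin map snd q -> coef q w = 0.
Proof.
move=> Hw; rewrite /coef big1_seq // => x /andP [/eqP Exw Hx].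
by move: Hw; rewrite -Exw map_f.
Qed.

Lemma fscale_fmul c (u X : fpoly k) : fscale c (fmul u X) = fmul (fscale c u) X.
Proof.
rewrite /fscale /fmul map_allpairs allpairs_mapl.
by apply: eq_allpairs => x y /=; rewrite mulrA.
Qed.

Lemma inI_nil : inI ([::] : fpoly k).
Proof. by have := @I_gen k (head [::] (rels k)) [::] [::]; apply; rewrite inE eqxx. Qed.

Lemma inI_coef0 q : (forall w, coef q w = 0) -> inI q.
Proof. by move=> H; apply: (I_ext _ inI_nil) => w; rewrite coef_nil H. Qed.

Lemma inI_scale c q : inI q -> inI (fscale c q).
Proof.
elim=> [r u v Hr|p1 q1 _ H1 _ H2|p1 q1 H _ H1].
- by rewrite fscale_fmul; apply: I_gen.
- by rewrite /fscale map_cat; apply: I_add.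
- by apply: I_ext H1 => w; rewrite !coef_scale H.
Qed.

Lemma inI_flatten (L : seq (fpoly k)) : {in L, forall X, inI X} -> inI (flatten L).
Proof.
elim: L => [_|X L IH H] /=; first exact: inI_nil.
apply: I_add; first by apply: H; rewrite inE eqxx.
by apply: IH => Y HY; apply: H; rewrite inE HY orbT.
Qed.

Definition fpair f q : k := \sum_(x <- q) x.1 * f x.2.

Definition contract f P : fpoly k := [seq (x.1 * f x.2.1, x.2.2) | x <- P].

Lemma sum_group_by (T : eqType) (L : seq (k * T)) (g : T -> k) (U : seq T) :
  uniq U -> {in L, forall x, x.2 \in U} ->
  \sum_(x <- L) x.1 * g x.2 = \sum_(t <- U) (\sum_(x <- L | x.2 == t) x.1) * g t.
Proof.
move=> uU HU.
transitivity (\sum_(t <- U) \sum_(x <- L) (if x.2 == t then x.1 * g x.2 else 0)).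
  rewrite exchange_big; apply: eq_big_seq => x Hx; rewrite -big_mkcond /= -big_filter.
  have -> : [seq t <- U | x.2 == t] = [:: x.2].
    by rewrite -(filter_pred1_uniq uU (HU x Hx)); apply: eq_filter => t; rewrite /= eq_sym.
  by rewrite big_seq1.
apply: eq_bigr => t _; rewrite mulr_suml [RHS]big_mkcond; apply: eq_bigr => x _ /=.
by case: eqP => [->|].
Qed.

Lemma eq_sum_weighted (T : eqType) (L1 L2 : seq (k * T)) (g : T -> k) :
  (forall t, \sum_(x <- L1 | x.2 == t) x.1 = \sum_(x <- L2 | x.2 == t) x.1) ->
  \sum_(x <- L1) x.1 * g x.2 = \sum_(x <- L2) x.1 * g x.2.
Proof.
move=> H; set U := undup (map snd L1 ++ map snd L2).
have uU : uniq U by apply: undup_uniq.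
have supp L : {subset L <= L1 ++ L2} -> {in L, forall x, x.2 \in U}.
  by move=> sL x /sL Hx; rewrite mem_undup -map_cat map_f.
rewrite !(sum_group_by g uU); first by apply: eq_bigr => t _; rewrite H.
  by apply: supp => x Hx; rewrite mem_cat Hx orbT.
by apply: supp => x Hx; rewrite mem_cat Hx.
Qed.

Lemma fpair_ext f p q : (forall w, coef p w = coef q w) -> fpair f p = fpair f q.
Proof. exact: eq_sum_weighted. Qed.

Lemma fpair_nil f : fpair f [::] = 0.
Proof. by rewrite /fpair big_nil. Qed.

Lemma fpair_cat f p q : fpair f (p ++ q) = fpair f p + fpair f q.
Proof. by rewrite /fpair big_cat. Qed.

Lemma fpair_scale f c p : fpair f (fscale c p) = c * fpair f p.
Proof. by rewrite /fpair big_map mulr_sumr; apply: eq_bigr => x _ /=; rewrite mulrA. Qed.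

Lemma fpair_subr f g c q : fpair (fun u => f u - c * g u) q = fpair f q - c * fpair g q.
Proof. by rewrite /fpair mulr_sumr -sumrB; apply: eq_bigr => x _; rewrite mulrBr mulrCA. Qed.

Lemma coef_contract f P o : coef (contract f P) o = \sum_(x <- P | x.2.2 == o) x.1 * f x.2.1.
Proof. by rewrite /coef /contract big_map. Qed.

Lemma contract_ext f P Q : (forall uv, coef2 P uv = coef2 Q uv) ->
  forall o, coef (contract f P) o = coef (contract f Q) o.
Proof.
move=> H o; rewrite !coef_contract.
pose g (uv : word * word) := if uv.2 == o then f uv.1 else 0.
have E R : \sum_(x <- R | x.2.2 == o) x.1 * f x.2.1 = \sum_(x <- R) x.1 * g x.2.
  by rewrite big_mkcond; apply: eq_bigr => x _; rewrite /g; case: eqP; rewrite ?mulr0.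
by rewrite !E; apply: eq_sum_weighted.
Qed.

Lemma coef_contract_tens f p q o : coef (contract f (tens p q)) o = fpair f p * coef q o.
Proof.
rewrite coef_contract /tens big_mkcond big_allpairs_dep /fpair mulr_suml.
apply: eq_bigr => x _; rewrite /coef mulr_sumr [RHS]big_mkcond; apply: eq_bigr => y _ /=.
by case: eqP; rewrite ?mulr0 // mulrAC.
Qed.

Lemma contract_cat f P Q : contract f (P ++ Q) = contract f P ++ contract f Q.
Proof. exact: map_cat. Qed.

Lemma contract_scale f c P : contract f (fscale2 c P) = fscale c (contract f P).
Proof. by rewrite /contract /fscale2 /fscale -!map_comp; apply: eq_map => x /=; rewrite mulrA. Qed.

Lemma contract_flatten f (L : seq (fpoly2 k)) :
  contract f (flatten L) = flatten (map (contract f) L).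
Proof. exact: map_flatten. Qed.

Lemma inJ_contract P : inJ P -> exists Ls : seq (fpoly k), {in Ls, forall q, inI q} /\
  forall f, {in Ls, forall q, fpair f q = 0} -> inI (contract f P).
Proof.
elim=> [p q Hp|p q Hq|P1 Q1 _ [L1 [H1 H1']] _ [L2 [H2 H2']]|P1 Q1 HPQ _ [L1 [H1 H1']]].
- exists [:: p]; split=> [q'|f Hf]; first by rewrite inE => /eqP ->.
  by apply: inI_coef0 => o; rewrite coef_contract_tens Hf ?mul0r ?mem_head.
- exists [::]; split=> // f _; apply: I_ext (inI_scale (fpair f p) Hq) => o.
  by rewrite coef_contract_tens coef_scale.
- exists (L1 ++ L2); split=> [q|f Hf].
    by rewrite mem_cat => /orP[]; [apply: H1|apply: H2].
  rewrite contract_cat; apply: I_add; [apply: H1'|apply: H2'] => q Hq;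
    by apply: Hf; rewrite mem_cat Hq ?orbT.
- exists L1; split=> // f Hf; apply: I_ext (H1' f Hf); exact: contract_ext.
Qed.

(* Generators are indexed [a, b, c, d, δ, δ^{-1}] = [0, ..., 5]. *)
Definition gdeg (g : gen) : int :=
  if (val g == 0%N) || (val g == 2%N) || (val g == 4%N) then 1
  else if val g == 5%N then -1 else 0.

Definition wdeg w : int := foldr (fun g acc => gdeg g + acc) 0 w.

Lemma wdeg_cat u v : wdeg (u ++ v) = wdeg u + wdeg v.
Proof. by elim: u => [|g u IH] /=; rewrite ?add0r // IH addrA. Qed.

Definition homog_part (D : int) q : fpoly k := [seq x <- q | wdeg x.2 == D].

Lemma coef_homog_part D q w :
  coef (homog_part D q) w = if wdeg w == D then coef q w else 0.
Proof.
rewrite /coef /homog_part big_filter_cond; case: eqP => Hw.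
  by apply: eq_bigl => x; case: (x.2 =P w) => [->|]; rewrite ?Hw ?eqxx ?andbF.
apply: big_pred0 => x; case: (x.2 =P w) => [->|]; last by rewrite andbF.
by rewrite andbT; apply/negbTE/eqP.
Qed.

Lemma rels_homog r x : r \in rels k -> x \in r -> wdeg x.2 = wdeg (head (0, [::]) r).2.
Proof.
have /allP homog : all (fun r => all (fun x => wdeg x.2 == wdeg (head (0, [::]) r).2) r)
                       (rels k) by [].
by move=> /homog /allP hr /hr /eqP.
Qed.

Lemma coef_fmul3 (u r v : fpoly k) w :
  coef (fmul u (fmul r v)) w = \sum_(x <- u) \sum_(z <- r) \sum_(y <- v)
     (if x.2 ++ (z.2 ++ y.2) == w then x.1 * (z.1 * y.1) else 0).
Proof.
rewrite /coef big_mkcond /fmul big_allpairs_dep; apply: eq_bigr => x _.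
by rewrite big_allpairs_dep.
Qed.

(* [u r v] has homogeneous part [Σ_x x (r (v)_{D - deg x - deg r})]. *)
Lemma inI_homog_gen r (u v : fpoly k) D : r \in rels k -> inI (homog_part D (fmul u (fmul r v))).
Proof.
move=> Hr; set e := wdeg (head (0, [::]) r).2.
pose vpart (x : k * word) := homog_part (D - wdeg x.2 - e) v.
apply: (@I_ext _ (flatten [seq fmul [:: x] (fmul r (vpart x)) | x <- u])); last first.
  by apply: inI_flatten => X /mapP [x _ ->]; apply: I_gen.
move=> w; rewrite coef_flatten big_map coef_homog_part coef_fmul3.
have E x : coef (fmul [:: x] (fmul r (vpart x))) w =
    \sum_(z <- r) \sum_(y <- v) (if wdeg y.2 == D - wdeg x.2 - e then
       (if x.2 ++ (z.2 ++ y.2) == w then x.1 * (z.1 * y.1) else 0) else 0).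
  by rewrite coef_fmul3 big_seq1; apply: eq_bigr => z _; rewrite big_filter big_mkcond.
under eq_bigr => x _ do rewrite E.
have degz z : z \in r -> wdeg z.2 = e by move=> Hz; rewrite (rels_homog Hr Hz).
case: eqP => Hw.
  apply: eq_bigr => x _; rewrite big_seq [RHS]big_seq; apply: eq_bigr => z Hz.
  apply: eq_bigr => y _; case: (_ =P w) => [Hxw|]; last by case: ifP.
  suff -> : wdeg y.2 == D - wdeg x.2 - e by [].
  by apply/eqP; move: Hw (degz z Hz); rewrite -Hxw !wdeg_cat; lia.
rewrite big1 // => x _; rewrite big_seq big1 // => z Hz; rewrite big1 // => y _.
case: (wdeg y.2 =P _) => // Hy; case: (_ =P w) => // Hxw; exfalso; apply: Hw.
by move: (degz z Hz) Hy; rewrite -Hxw !wdeg_cat; clearbody e; lia.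
Qed.

Lemma inI_homog_part q D : inI q -> inI (homog_part D q).
Proof.
move=> Iq; elim: Iq D => [r u v Hr|p1 q1 _ H1 _ H2|p1 q1 H _ H1] D.
- exact: inI_homog_gen.
- by rewrite /homog_part filter_cat; apply: I_add; [apply: H1|apply: H2].
- by apply: I_ext (H1 D) => w; rewrite !coef_homog_part H.
Qed.

Inductive inSpan (Ms : seq (fpoly k)) : fpoly k -> Prop :=
| span_nil : inSpan Ms [::]
| span_add m c q : m \in Ms -> inSpan Ms q -> inSpan Ms (fscale c m ++ q)
| span_ext p q : (forall w, coef p w = coef q w) -> inSpan Ms p -> inSpan Ms q.

Lemma inSpan_inI Ms q : {in Ms, forall m, inI m} -> inSpan Ms q -> inI q.
Proof.
move=> IMs; elim=> [|m c q' Hm _ IH|p q' H _ IH]; first exact: inI_nil.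
- by apply: I_add IH; apply/inI_scale/IMs.
- exact: I_ext IH.
Qed.

Lemma inSpan_fpair f Ms q : {in Ms, forall m, fpair f m = 0} -> inSpan Ms q -> fpair f q = 0.
Proof.
move=> fMs; elim=> [|m c q' Hm _ IH|p q' H _ IH]; first exact: fpair_nil.
- by rewrite fpair_cat fpair_scale fMs // IH mulr0 addr0.
- by rewrite -(fpair_ext f H).
Qed.

Lemma inSpan_cons m Ms q : inSpan Ms q -> inSpan (m :: Ms) q.
Proof.
elim=> [|m' c q' Hm _ IH|p q' H _ IH]; first exact: span_nil.
- by apply: span_add IH; rewrite inE Hm orbT.
- exact: span_ext IH.
Qed.

Definition supported (Pw : pred word) q := forall x, x \in q -> Pw x.2.

Lemma supported_cat Pw p q : supported Pw p -> supported Pw q -> supported Pw (p ++ q).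
Proof. by move=> Sp Sq x; rewrite mem_cat => /orP[/Sp|/Sq]. Qed.

Lemma supported_scale Pw c q : supported Pw q -> supported Pw (fscale c q).
Proof. by move=> Sq _ /mapP [x /Sq Hx ->]. Qed.

Lemma functional_nonzero (Pw : pred word) q : supported Pw q -> ~ inSpan [::] q ->
  exists f, (forall u, ~~ Pw u -> f u = 0) /\ fpair f q = 1.
Proof.
move=> Sq nq; have [[w nzw]|all0] := classic (exists w, coef q w != 0); last first.
  exfalso; apply/nq/(span_ext _ (span_nil _)) => w; rewrite coef_nil.
  by apply/esym/eqP/negPn/negP => nzw; apply: all0; exists w.
have /mapP [x /Sq Pw_w Ew] : w \in map snd q by apply: contraNT nzw => /coef_notin ->.
exists (fun u => if u == w then (coef q w)^-1 else 0); split.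
  by move=> u; case: eqP => // -> /negP; rewrite Ew.
rewrite /fpair (eq_bigr (fun y => (if y.2 == w then y.1 else 0) * (coef q w)^-1)).
  by rewrite -mulr_suml -big_mkcond divff.
by move=> y _; case: eqP; rewrite ?mulr0 ?mul0r.
Qed.

(* Gaussian elimination against the finitely many [Ms], one at a time. *)
Lemma separating_functional (Pw : pred word) Ms q :
  supported Pw q -> {in Ms, forall m, supported Pw m} -> ~ inSpan Ms q ->
  exists f, [/\ forall u, ~~ Pw u -> f u = 0,
              {in Ms, forall m, fpair f m = 0} & fpair f q = 1].
Proof.
elim: Ms q => [|m Ms IH] q Sq SMs nq.
  by have [f [f0 fq]] := functional_nonzero Sq nq; exists f.
have Sm : supported Pw m by apply/SMs/mem_head.
have {}SMs : {in Ms, forall m, supported Pw m} by move=> m' Hm'; apply/SMs/mem_behead.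
have [m_dep|m_indep] := classic (inSpan Ms m).
  have [|g [g0 gMs gq]] := IH q Sq SMs; first by move=> H; apply/nq/inSpan_cons.
  exists g; split=> // m'; rewrite inE => /orP [/eqP ->|]; last exact: gMs.
  exact: inSpan_fpair gMs m_dep.
have [h [h0 hMs hm]] := IH m Sm SMs m_indep.
pose q1 := q ++ fscale (- fpair h q) m.
have [|g [g0 gMs gq1]] := IH q1 (supported_cat Sq (supported_scale Sm)) SMs.
  move=> Hq1; apply: nq; apply: (span_ext (p := fscale (fpair h q) m ++ q1)).
    by move=> w; rewrite !coef_cat !coef_scale mulNr addrCA subrr addr0.
  by apply: span_add (inSpan_cons _ Hq1); rewrite mem_head.
exists (fun u => g u - fpair g m * h u); split.
- by move=> u Hu; rewrite g0 // h0 // mulr0 subrr.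
- move=> m'; rewrite inE fpair_subr => /orP [/eqP ->|Hm']; first by rewrite hm mulr1 subrr.
  by rewrite gMs // hMs // mulr0 subrr.
- by rewrite fpair_subr -gq1 fpair_cat fpair_scale mulNr mulrC.
Qed.

Definition no_ac w := all (fun g => (g != ga) && (g != gc)) w.

Definition b2d w : word := map (fun g => if g == gb then gd else g) w.

Lemma no_ac_gen g : (g != ga) && (g != gc) -> [\/ g = gb, g = gd, g = gdel | g = gdeli].
Proof.
by case: g => [[|[|[|[|[|[|n]]]]]] Hn] //= _;
  [constructor 1|constructor 2|constructor 3|constructor 4]; apply: val_inj.
Qed.

Lemma wdeg_deltaWord w : no_ac w -> forall x, x \in deltaWord k w ->
  wdeg x.2.1 = wdeg w + (count_mem gb x.2.2)%:Z.
Proof.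
elim: w => [_ x|g w IH /andP [Hg Hw] x]; first by rewrite inE => /eqP ->.
move=> /allpairsP [[x1 y1] [/= Hx1 Hy1 ->]] /=.
have {}IH := IH Hw _ Hy1.
case/no_ac_gen: Hg Hx1 => ->; rewrite /= !inE; try case/orP; move/eqP => -> /=;
  rewrite IH /gdeg /=; move: (count_mem gb y1.2.2) (wdeg w) => n d; lia.
Qed.

Lemma deltaWord_no_b w : no_ac w ->
  [seq x <- deltaWord k w | count_mem gb x.2.2 == 0%N] = [:: (1, (w, b2d w))].
Proof.
elim: w => [//|g w IH /andP [Hg Hw]]; have {}IH := IH Hw.
pose nob (x : k * (word * word)) := count_mem gb x.2.2 == 0%N.
case/no_ac_gen: Hg => ->; rewrite /= /fmul2 /= !filter_cat !filter_map /= -/nob.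
- by rewrite (eq_filter (a2 := pred0)) // filter_pred0 (eq_filter (a2 := nob)) // IH /= mulr1.
- by rewrite (eq_filter (a2 := pred0)) // filter_pred0 (eq_filter (a2 := nob)) // IH /= mulr1.
- by rewrite (eq_filter (a2 := nob)) // IH /= mulr1.
- by rewrite (eq_filter (a2 := nob)) // IH /= mulr1.
Qed.

Lemma coef_contract_deltaWord f w o : no_ac w -> (forall u, wdeg u != wdeg w -> f u = 0) ->
  coef (contract f (deltaWord k w)) o = (b2d w == o)%:R * f w.
Proof.
move=> Hw f0; rewrite coef_contract.
transitivity (\sum_(x <- deltaWord k w | (count_mem gb x.2.2 == 0%N) && (x.2.2 == o))
   x.1 * f x.2.1).
  rewrite big_mkcond [RHS]big_mkcond; apply: eq_big_seq => x Hx /=.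
  case: (boolP (count_mem gb x.2.2 == 0%N)) => Hc //=; case: (x.2.2 == o) => //.
  rewrite f0 ?mulr0 // (wdeg_deltaWord Hw Hx).
  by move: Hc; move: (count_mem gb x.2.2) (wdeg w) => n d Hn; apply/eqP; lia.
rewrite -big_filter_cond deltaWord_no_b // big_cons big_nil /=.
by case: eqP; rewrite ?mul1r ?mul0r ?addr0.
Qed.

Lemma coef_contract_Delta f q o :
  coef (contract f (Delta q)) o = \sum_(x <- q) x.1 * coef (contract f (deltaWord k x.2)) o.
Proof.
rewrite /Delta contract_flatten coef_flatten -map_comp big_map; apply: eq_bigr => x _ /=.
by rewrite contract_scale coef_scale.
Qed.

Lemma wdeg_b2d w : wdeg (b2d w) = wdeg w.
Proof. by elim: w => [//|g w IH] /=; rewrite -/(b2d w) IH; case: eqP => [->|]. Qed.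

Lemma b2d_delw x : b2d (delw x) = delw x.
Proof. by case: x => m; rewrite /b2d map_nseq. Qed.

Lemma inW_props s w : inW s w -> [/\ no_ac w, b2d w = hwWord s & wdeg w = wdeg (hwWord s)].
Proof.
move=> [ys [_ [ys_le ->]]].
have hw : b2d (nablaWord s ys) = hwWord s.
  rewrite /b2d /nablaWord map_flatten -map_comp /hwWord.
  rewrite -[in RHS](mkseq_nth (0%:Z, 0%N) s) /mkseq -map_comp.
  apply: congr1; apply/eq_in_map => i.
  rewrite mem_iota add0n => /andP [_ Hi] /=.
  by rewrite !map_cat -/(b2d _) b2d_delw !map_nseq /= -nseqD subnKC // ys_le.
split=> //; last by rewrite -hw wdeg_b2d.
apply/allP => g /flattenP [X /mapP [i _ ->]]; rewrite !mem_cat => /orP [|/orP []].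
- by case: (nth _ s i).1 => m; rewrite mem_nseq => /andP [_ /eqP ->].
- by rewrite mem_nseq => /andP [_ /eqP ->].
- by rewrite mem_nseq => /andP [_ /eqP ->].
Qed.

Lemma coef_contract_Delta_nabla s f q o :
  {in q, forall x, inW s x.2} -> (forall u, wdeg u != wdeg (hwWord s) -> f u = 0) ->
  coef (contract f (Delta q)) o = (hwWord s == o)%:R * fpair f q.
Proof.
move=> Wq f0; rewrite coef_contract_Delta /fpair mulr_sumr big_seq [RHS]big_seq.
apply: eq_bigr => x /Wq /inW_props [acx b2dx degx].
have f0x u : wdeg u != wdeg x.2 -> f u = 0 by rewrite degx; apply: f0.
by rewrite coef_contract_deltaWord // b2dx mulrCA.
Qed.

Lemma coef_contract_tensors f (l : seq (fpoly k * fpoly k)) o :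
  coef (contract f (flatten [seq tens x.1 x.2 | x <- l])) o =
  coef (flatten [seq fscale (fpair f x.1) x.2 | x <- l]) o.
Proof.
rewrite contract_flatten !coef_flatten -map_comp !big_map.
by apply: eq_bigr => x _ /=; rewrite coef_contract_tens coef_scale.
Qed.

Lemma subspaceO_comb V (c : fpoly k * fpoly k -> k) (l : seq (fpoly k * fpoly k)) :
  subspaceO V -> {in l, forall x, V x.2} -> V (flatten [seq fscale (c x) x.2 | x <- l]).
Proof.
case=> _ V0 Vcat Vscale; elim: l => [//|x l IH] Vl /=.
apply: Vcat; first by apply/Vscale/Vl/mem_head.
by apply: IH => y Hy; apply/Vl/mem_behead.
Qed.

Lemma fpair_homog_part f D q :
  (forall u, wdeg u != D -> f u = 0) -> fpair f (homog_part D q) = fpair f q.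
Proof.
move=> f0; rewrite /fpair /homog_part big_filter big_mkcond.
by apply: eq_bigr => x _; case: eqP => // /eqP Hx; rewrite f0 // mulr0.
Qed.

(* Only the degree-[D] parts of the [Ls] matter, and those still lie in [I]. *)
Lemma separating_functional_homog D q (Ls : seq (fpoly k)) :
  supported (fun u => wdeg u == D) q -> ~ inI q -> {in Ls, forall L, inI L} ->
  exists f, [/\ forall u, wdeg u != D -> f u = 0,
              {in Ls, forall L, fpair f L = 0} & fpair f q = 1].
Proof.
move=> Sq nIq ILs.
have SLs : {in map (homog_part D) Ls, forall m, supported (fun u => wdeg u == D) m}.
  by move=> _ /mapP [L _ ->] x; rewrite mem_filter => /andP [].
have nspan : ~ inSpan (map (homog_part D) Ls) q.
  move=> /inSpan_inI Iq; apply/nIq/Iq => _ /mapP [L /ILs IL ->].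
  exact: inI_homog_part.
have [f [f0 fLs fq]] := separating_functional Sq SLs nspan.
exists f; split=> // L HL.
by rewrite -(fpair_homog_part _ f0) fLs // map_f.
Qed.

End Onc.

Theorem mainTheorem10 (k : closedFieldType) (s : seq (int * nat))
  (V : fpoly k -> Prop) :
  reducedLam s ->
  subcomodule V ->
  (forall p, V p -> inNabla s p) ->
  (exists p, V p /\ ~ eqO p [::]) ->
  V (fw k (hwWord s)).
Proof.
(* The argument does not need [λ] to be in reduced form. *)
move=> _ [VO VDelta] Vnabla [p [Vp nz_p]].
have [q [Wq Epq]] := Vnabla p Vp.
have Vq : V q by case: VO => Vext _ _ _; apply: Vext Epq Vp.
have nIq : ~ inI q.
  move=> Iq; apply/nz_p/(I_ext _ (I_add Epq Iq)) => w.
  by rewrite coef_cat !coef_fsub coef_nil subr0 subrK.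
have [l [Vl J_Delta]] := VDelta q Vq.
have [Ls [ILs contract_inI]] := inJ_contract J_Delta.
have Sq : supported (fun u => wdeg u == wdeg (hwWord s)) q.
  by move=> x /Wq /inW_props [_ _ ->].
have [f [f0 fLs fq]] := separating_functional_homog Sq nIq ILs.
have Vcomb := subspaceO_comb (fun x => fpair f x.1) VO Vl.
case: VO => Vext _ _ _; apply: Vext Vcomb.
apply: I_ext (inI_scale (-1) (contract_inI f fLs)) => o.
rewrite coef_scale /fsub2 contract_cat contract_scale coef_cat coef_scale.
rewrite (coef_contract_Delta_nabla _ Wq f0) fq mulr1 coef_contract_tensors.
by rewrite coef_fsub coef_fw mulN1r mulN1r opprB.
Qed.
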